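(* Suppose that $F_k$ satisfies \begin{equation*} \begin{bmatrix} R^{-1} & F_k \\ F_k^T & -\alpha \big((A+BF_k)^T\tilde{P}+\tilde{P}(A+BF_k)\big)-Q \end{bmatrix} \succ 0. \end{equation*} Then the optimization problem of maximizing $\delta_k$ subject to the performance constraint holding for every $\xi \in [0,\delta_k]$, with the feedback gain fixed to $F_k$, is feasible (i.e., it admits a strictly positive $\delta_k$).
   Context: Consider the LTI system $\dot x(t)=Ax(t)+Bu(t)$, $x(0)=x_0$, with $(A,B)$ stabilizable, under the sample-and-hold law $u(t)=F_k x_k$, $x_k:=x(t_k)$, for $t\in[t_k,t_k+\delta_k)$. Let $Q\succ 0$, $R\succ 0$, let $\tilde F$ be a stabilizing feedback gain and $\tilde P\succ 0$ the unique solution of $(A+B\tilde F)^T\tilde P+\tilde P(A+B\tilde F)+Q+\tilde F^TR\tilde F=0$, and let $V(x)=x^T\tilde P x$ and $\alpha>1$. The cost-to-go is $J_k(F_k,\xi;x_k)=\int_{t_k}^{t_k+\xi}(x(t)^TQx(t)+u(t)^TRu(t))\,dt$. The performance constraint is $J_k(F_k,\xi;x_k)\le \alpha\big(V(x(t_k))-V(x(t_k+\xi))\big)$. The problem considered is: maximize $\delta_k$ subject to this constraint for every $\xi\in[0,\delta_k]$, with $F_k$ fixed. *)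

From HB Require Import structures.
From mathcomp Require Import all_boot all_order all_algebra.
From mathcomp Require Import all_classical all_reals all_analysis.
Set Implicit Arguments. Unset Strict Implicit. Unset Printing Implicit Defensive.
Import Order.TTheory GRing.Theory Num.Theory.
Import numFieldNormedType.Exports.
Local Open Scope classical_set_scope.
Local Open Scope ring_scope.

Definition quad (R : realType) (n : nat) (M : 'M[R]_n) (v : 'cV[R]_n) : R :=
  (v^T *m M *m v) 0 0.

Definition posdef (R : realType) (n : nat) (M : 'M[R]_n) : Prop :=
  M^T = M /\ forall v : 'cV[R]_n, v != 0 -> 0 < quad M v.

Definition hurwitz (R : realType) (n : nat) (M : 'M[R]_n) : Prop :=
  forall y : R -> 'cV[R]_n,
    (forall t : R, is_derive t (1 : R) y (M *m y t)) ->
    y t @[t --> +oo%R] --> (0 : 'cV[R]_n).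

Definition stabilizable (R : realType) (n m : nat)
  (A : 'M[R]_n) (B : 'M[R]_(n, m)) : Prop :=
  exists K : 'M[R]_(m, n), hurwitz (A + B *m K).

(* cost-to-go over [t_k, t_k + xi], in local time s = t - t_k,
   along the trajectory x with constant input u = F x0 *)
Definition cost_to_go (R : realType) (n m : nat) (Q : 'M[R]_n) (Rw : 'M[R]_m)
  (F : 'M[R]_(m, n)) (x0 : 'cV[R]_n) (x : R -> 'cV[R]_n) (xi : R) : R :=
  Rintegral lebesgue_measure `[0, xi]
    (fun s => quad Q (x s) + quad Rw (F *m x0)).

From HB Require Import structures.
From mathcomp Require Import all_boot all_order all_algebra.
From mathcomp Require Import all_classical all_reals all_analysis.
From mathcomp Require Import ring lra.
Set Implicit Arguments.
Unset Strict Implicit.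
Unset Printing Implicit Defensive.
Import Order.TTheory GRing.Theory Num.Theory.
Import numFieldNormedType.Exports.
Local Open Scope classical_set_scope.
Local Open Scope ring_scope.

(* Let V(s) = x(s)^T Pt x(s) and let f(s) be the running cost. If x0 <> 0,
   the Schur complement of the LMI says exactly that f(0) + alpha V'(0) < 0.
   By continuity, on a short interval [0, delta] both f and alpha V' stay
   within half this slack of their values at 0; integrating the bound on f
   and applying the mean value theorem to V gives the performance constraint
   for every xi in [0, delta]. If x0 = 0, the trajectory solves x' = A x from
   0, so by Gronwall's inequality for |x|^2 it stays at 0 and both sides of
   the constraint vanish. *)

Section matrix_derivative.
Context {R : realFieldType} {V : normedModType R}.

Lemma is_derive_mxP p q (y : V -> 'M[R]_(p, q)) (t v : V) (dy : 'M[R]_(p, q)) :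
  is_derive t v y dy <-> forall i j, is_derive t v (fun s => y s i j) (dy i j).
Proof.
split=> [[dery <-] i j | dery].
  have derij := (derivable_mxP y t v).1 dery i j.
  by apply: DeriveDef => //; rewrite derive_mx // mxE.
have dery' : derivable y t v by apply/derivable_mxP => i j; case: (dery i j).
apply: DeriveDef => //; apply/matrixP => i j.
by rewrite derive_mx // mxE derive_val.
Qed.

Lemma is_derive_mulmx p q r (M : 'M[R]_(p, q)) (y : V -> 'M[R]_(q, r)) t v dy :
  is_derive t v y dy -> is_derive t v (fun s => M *m y s) (M *m dy).
Proof.
move=> /is_derive_mxP dery; apply/is_derive_mxP => i j; rewrite mxE.
have -> : (fun s => (M *m y s) i j) = \sum_(k < q) (M i k \*: fun s => y s k j).
  by apply/funext => s; rewrite fct_sumE mxE.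
by apply: is_derive_sum => k; exact: is_deriveZ.
Qed.

End matrix_derivative.

Section real_functions.
Variable R : realType.

Lemma is_derive_continuous (f df : R -> R) :
  (forall t, is_derive t (1 : R) f (df t)) -> continuous f.
Proof.
move=> derf t; apply: differentiable_continuous.
by apply/derivable1_diffP; case: (derf t).
Qed.

Lemma gronwall_le (W dW : R -> R) (k : R) :
  (forall t, is_derive t (1 : R) W (dW t)) -> (forall t, dW t <= k * W t) ->
  forall t, 0 <= t -> W t <= expR (k * t) * W 0.
Proof.
move=> derW dW_le t t_ge0.
pose g s := expR (- (k * s)) * W s.
have der_g s : is_derive s (1 : R) g (expR (- (k * s)) * (dW s - k * W s)).
  by apply: is_derive_eq; rewrite /GRing.scale /=; ring.
have -> : W 0 = g 0 by rewrite /g mulr0 oppr0 expR0 mul1r.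
have -> : W t = expR (k * t) * g t by rewrite /g mulrA -expRD subrr expR0 mul1r.
rewrite ler_wpM2l ?expR_ge0 //.
apply: (ler0_derive1_nincr (a := 0) (b := t)) => // [s _|].
- rewrite derive1E (@derive_val _ _ _ _ _ _ _ (der_g s)).
  by rewrite pmulr_rle0 ?expR_gt0 // subr_le0.
- exact: continuous_subspaceT (is_derive_continuous der_g).
Qed.

Lemma Rintegral_le_cst (f : R -> R) (a b c : R) : a <= b ->
  {within `[a, b], continuous f} -> (forall s, a <= s <= b -> f s <= c) ->
  Rintegral lebesgue_measure `[a, b] f <= c * (b - a).
Proof.
move=> ab f_cont f_le.
have cst_int : lebesgue_measure.-integrable `[a, b] (EFin \o cst c).
  apply: continuous_compact_integrable; first exact: segment_compact.
  by apply: continuous_subspaceT => ?; exact: cvg_cst.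
apply: (@le_trans _ _ (Rintegral lebesgue_measure `[a, b] (cst c))).
  apply: le_Rintegral => //.
  by apply: continuous_compact_integrable => //; exact: segment_compact.
rewrite Rintegral_cst //= lebesgue_measure_itv /= lte_fin.
by case: ltgtP ab => // -> _; rewrite subrr mulr0.
Qed.

Lemma Rintegral_le_decrease (f V dV : R -> R) (alpha : R) :
  0 < alpha -> continuous f -> (forall t, is_derive t (1 : R) V (dV t)) ->
  {for 0, continuous dV} -> f 0 + alpha * dV 0 < 0 ->
  exists delta, 0 < delta /\ forall xi, 0 <= xi <= delta ->
    Rintegral lebesgue_measure `[0, xi] f <= alpha * (V 0 - V xi).
Proof.
move=> alpha_gt0 f_cont derV dV_cont0 slope_lt0.
set e := - (f 0 + alpha * dV 0) / 2.
have e_gt0 : 0 < e by rewrite divr_gt0 // oppr_gt0.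
have : \forall s \near 0, f s <= f 0 + e /\ dV s <= dV 0 + e / alpha.
  near=> s; split; near: s.
    by apply: (cvgr_le _ (f_cont 0)); rewrite ltrDl.
  by apply: (cvgr_le _ dV_cont0); rewrite ltrDl divr_gt0.
move=> /nbhs_ballP [d d_gt0 near0].
have {}near0 s : 0 <= s <= d / 2 -> f s <= f 0 + e /\ dV s <= dV 0 + e / alpha.
  move=> /andP [s_ge0 s_le]; apply: near0.
  rewrite -ball_normE /ball_ /= sub0r normrN ger0_norm //.
  by apply: le_lt_trans s_le _; rewrite ltr_pdivrMr // ltr_pMr // ltr1n.
exists (d / 2); split => [|xi /andP [xi_ge0 xi_le]]; first by rewrite divr_gt0.
have s_near0 s : 0 <= s <= xi -> 0 <= s <= d / 2.
  by move=> /andP [s_ge0 s_le]; rewrite s_ge0 (le_trans s_le).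
have := @Rintegral_le_cst f 0 xi (f 0 + e) xi_ge0 (continuous_subspaceT f_cont).
move=> /(_ (fun s hs => (near0 s (s_near0 s hs)).1)); rewrite subr0 => int_le.
have [c c_in V_mvt] := MVT_segment xi_ge0 (fun s _ => derV s)
  (continuous_subspaceT (is_derive_continuous derV)).
have [_ dVc_le] : f c <= f 0 + e /\ dV c <= dV 0 + e / alpha.
  by apply/near0/s_near0; move: c_in; rewrite in_itv.
have -> : alpha * (V 0 - V xi) = (- (alpha * dV c)) * xi.
  by rewrite -opprB V_mvt subr0 mulrN mulNr mulrA.
apply: le_trans int_le (ler_wpM2r xi_ge0 _).
have := ler_wpM2l (ltW alpha_gt0) dVc_le.
rewrite mulrDr mulrCA mulfV ?gt_eqF // mulr1 /e; lra.
Unshelve. all: by end_near.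
Qed.

End real_functions.

Section quadratic_forms.
Variable R : realType.

Definition bil n (M : 'M[R]_n) (u w : 'cV[R]_n) : R := (u^T *m M *m w) 0 0.

Lemma quadv0 n (M : 'M[R]_n) : quad M 0 = 0.
Proof. by rewrite /quad mulmx0 mxE. Qed.

Lemma quadE n (M : 'M[R]_n) v :
  quad M v = \sum_i \sum_j v i 0 * M i j * v j 0.
Proof.
rewrite /quad mxE exchange_big; apply: eq_bigr => j _; rewrite mxE mulr_suml.
by apply: eq_bigr => i _; rewrite mxE.
Qed.

Lemma quad1E n (v : 'cV[R]_n) : quad 1%:M v = \sum_i v i 0 ^+ 2.
Proof.
rewrite quadE; apply: eq_bigr => i _; rewrite (bigD1 i) //= big1 => [|j ji].
  by rewrite mxE eqxx mulr1 addr0 expr2.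
by rewrite mxE eq_sym (negbTE ji) mulr0 mul0r.
Qed.

Lemma sqr_coord_le_quad1 n (v : 'cV[R]_n) i : v i 0 ^+ 2 <= quad 1%:M v.
Proof.
by rewrite quad1E (bigD1 i) //= lerDl; apply: sumr_ge0 => j _; exact: sqr_ge0.
Qed.

Lemma quad1_ge0 n (v : 'cV[R]_n) : 0 <= quad 1%:M v.
Proof. by rewrite quad1E; apply: sumr_ge0 => i _; exact: sqr_ge0. Qed.

Lemma quad1_eq0 n (v : 'cV[R]_n) : (quad 1%:M v == 0) = (v == 0).
Proof.
apply/idP/eqP => [|->]; last exact/eqP/quadv0.
rewrite quad1E psumr_eq0 => [/allP v0|i _]; last exact: sqr_ge0.
apply/matrixP => i j; rewrite (ord1 j) mxE.
by apply/eqP; rewrite -sqrf_eq0; apply: v0; rewrite mem_index_enum.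
Qed.

Lemma quad_le_quad1 n (M : 'M[R]_n) v :
  quad M v <= (\sum_i \sum_j `|M i j|) * quad 1%:M v.
Proof.
rewrite quadE mulr_suml; apply: ler_sum => i _; rewrite mulr_suml.
apply: ler_sum => j _; rewrite mulrAC.
have := sqr_coord_le_quad1 v i; have := sqr_coord_le_quad1 v j.
set a := v i 0; set b := v j 0; set W := quad 1%:M v => bW aW.
have abW : `|a * b| <= W by rewrite ler_norml; apply/andP; split; nra.
by apply: le_trans (ler_norm _) _; rewrite normrM mulrC ler_wpM2l.
Qed.

Lemma quadD n (M N : 'M[R]_n) v : quad (M + N) v = quad M v + quad N v.
Proof. by rewrite /quad mulmxDr mulmxDl mxE. Qed.

Lemma quadB n (M N : 'M[R]_n) v : quad (M - N) v = quad M v - quad N v.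
Proof. by rewrite /quad mulmxBr mulmxBl !mxE. Qed.

Lemma quadZ n a (M : 'M[R]_n) v : quad (a *: M) v = a * quad M v.
Proof. by rewrite /quad -scalemxAr -scalemxAl mxE. Qed.

Lemma quad_lyapunov n (M X : 'M[R]_n) v :
  quad (X^T *m M + M *m X) v = bil M (X *m v) v + bil M v (X *m v).
Proof. by rewrite quadD /quad /bil trmx_mul !mulmxA. Qed.

Lemma is_derive_bil n (M : 'M[R]_n) (u w : R -> 'cV[R]_n) (t : R) du dw :
  is_derive t (1 : R) u du -> is_derive t (1 : R) w dw ->
  is_derive t (1 : R) (fun s => bil M (u s) (w s))
    (bil M du (w t) + bil M (u t) dw).
Proof.
move=> /is_derive_mxP deru derw.
have /is_derive_mxP derMw := is_derive_mulmx M derw.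
have bilE (a b : 'cV[R]_n) : bil M a b = \sum_k a k 0 * (M *m b) k 0.
  by rewrite /bil -mulmxA mxE; apply: eq_bigr => k _; rewrite mxE.
have -> : (fun s => bil M (u s) (w s)) =
    \sum_k ((fun s => u s k 0) * (fun s => (M *m w s) k 0)).
  by apply/funext => s; rewrite fct_sumE bilE.
apply: is_derive_eq; rewrite !bilE -big_split /=; apply: eq_bigr => k _.
by rewrite /GRing.scale /= addrC mulrC [X in _ + X]mulrC.
Qed.

Lemma posdef_unitmx n (M : 'M[R]_n) : posdef M -> M \in unitmx.
Proof.
move=> [_ Mpos]; rewrite unitmxE unitfE; apply/negP => /det0P [v v_neq0 vM0].
have := Mpos v^T; rewrite trmx_eq0 /quad trmxK vM0 mul0mx mxE ltxx.
by move=> /(_ v_neq0).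
Qed.

(* Evaluate the block form at [col_mx (- Rw *m F *m v) v]: it equals
   [quad M v - quad Rw (F *m v)]. *)
Lemma posdef_schur_lt m n (Rw : 'M[R]_m) (F : 'M[R]_(m, n)) (M : 'M[R]_n) v :
  posdef Rw -> posdef (block_mx (invmx Rw) F F^T M) -> v != 0 ->
  quad Rw (F *m v) < quad M v.
Proof.
move=> Rw_pos [_ block_pos] v_neq0.
have [Rw_sym _] := Rw_pos; have Rw_unit := posdef_unitmx Rw_pos.
set y := F *m v; set a := - (Rw *m y).
have : col_mx a v != 0 by rewrite col_mx_eq0 negb_and v_neq0 orbT.
move=> /block_pos; rewrite /quad tr_col_mx mul_row_block mul_row_col.
have -> : a^T *m invmx Rw = - y^T.
  by rewrite /a linearN /= trmx_mul Rw_sym mulNmx mulmxK.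
have -> : v^T *m F^T = y^T by rewrite /y trmx_mul.
rewrite addNr mul0mx add0r mulmxDl [(_ *m _ + _) 0 0]mxE.
have -> : a^T *m F *m v = - (y^T *m Rw *m y).
  by rewrite /a linearN /= trmx_mul Rw_sym !mulNmx -mulmxA.
by rewrite mxE addrC subr_gt0.
Qed.

Lemma linear_ode_zero n (A : 'M[R]_n) (x : R -> 'cV[R]_n) :
  (forall t, is_derive t (1 : R) x (A *m x t)) -> x 0 = 0 ->
  forall t, 0 <= t -> x t = 0.
Proof.
move=> derx x0_eq0 t t_ge0.
have derW s :
    is_derive s (1 : R) (fun s => quad 1%:M (x s)) (quad (A^T + A) (x s)).
  have -> : A^T + A = A^T *m 1%:M + 1%:M *m A by rewrite mulmx1 mul1mx.
  by rewrite quad_lyapunov; exact: is_derive_bil.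
have := gronwall_le derW (fun s => quad_le_quad1 (A^T + A) (x s)) t_ge0.
have /eqP -> : quad 1%:M (x 0) == 0 by rewrite quad1_eq0 x0_eq0.
by rewrite mulr0 => W_le0; apply/eqP; rewrite -quad1_eq0 eq_le W_le0 quad1_ge0.
Qed.

End quadratic_forms.

Theorem proposition2 (R : realType) (n m : nat)
  (A : 'M[R]_n) (B : 'M[R]_(n, m)) (Q : 'M[R]_n) (Rw : 'M[R]_m)
  (Ft : 'M[R]_(m, n)) (Pt : 'M[R]_n) (alpha : R) (Fk : 'M[R]_(m, n)) :
  stabilizable A B ->
  posdef Q -> posdef Rw ->
  hurwitz (A + B *m Ft) ->
  posdef Pt ->
  (A + B *m Ft)^T *m Pt + Pt *m (A + B *m Ft) + Q + Ft^T *m Rw *m Ft = 0 ->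
  (forall P' : 'M[R]_n,
     (A + B *m Ft)^T *m P' + P' *m (A + B *m Ft) + Q + Ft^T *m Rw *m Ft = 0 ->
     P' = Pt) ->
  1 < alpha ->
  posdef (block_mx (invmx Rw) Fk Fk^T
            (- alpha *: ((A + B *m Fk)^T *m Pt + Pt *m (A + B *m Fk)) - Q)) ->
  forall (x0 : 'cV[R]_n) (x : R -> 'cV[R]_n),
    x 0 = x0 ->
    (forall s : R, is_derive s (1 : R) x (A *m x s + B *m (Fk *m x0))) ->
    exists delta : R, 0 < delta /\
      forall xi : R, 0 <= xi <= delta ->
        cost_to_go Q Rw Fk x0 x xi <= alpha * (quad Pt x0 - quad Pt (x xi)).
Proof.
move=> _ _ Rw_pos _ _ _ _ alpha_gt1 block_pos x0 x x_0 derx.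
rewrite /cost_to_go; set f := fun s => quad Q (x s) + quad Rw (Fk *m x0).
have f_cont : continuous f.
  apply: is_derive_continuous => s.
  exact: is_deriveD (is_derive_bil Q (derx s) (derx s)) (is_derive_cst _ _ _).
have [x0_eq0 | x0_neq0] := eqVneq x0 0.
  have derx0 s : is_derive s (1 : R) x (A *m x s).
    by rewrite -[A *m x s]addr0 -(mulmx0 _ B) -(mulmx0 _ Fk) -x0_eq0.
  have x_eq0 := linear_ode_zero derx0 (etrans x_0 x0_eq0).
  exists 1; split => // xi /andP [xi_ge0 _].
  rewrite x_eq0 // x0_eq0 quadv0 subrr mulr0 -[X in _ <= X](mul0r (xi - 0)).
  apply: Rintegral_le_cst (continuous_subspaceT f_cont) _ => // s.
  move=> /andP [s_ge0 _].
  by rewrite /f x_eq0 // x0_eq0 mulmx0 !quadv0 addr0.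
pose dx s := A *m x s + B *m (Fk *m x0).
have derdx s : is_derive s (1 : R) dx (A *m dx s).
  rewrite -[A *m dx s]addr0.
  exact: is_deriveD (is_derive_mulmx A (derx s)) (is_derive_cst _ _ _).
pose dV s := bil Pt (dx s) (x s) + bil Pt (x s) (dx s).
have dV_cont : continuous dV.
  apply: is_derive_continuous => s.
  exact: is_deriveD (is_derive_bil Pt (derdx s) (derx s))
                    (is_derive_bil Pt (derx s) (derdx s)).
rewrite -[quad Pt x0](congr1 (quad Pt) x_0).
have derV s := is_derive_bil Pt (derx s) (derx s).
apply: (Rintegral_le_decrease _ f_cont derV (dV_cont 0)); first lra.
have dV0 : dV 0 = quad ((A + B *m Fk)^T *m Pt + Pt *m (A + B *m Fk)) x0.
  by rewrite /dV /dx x_0 quad_lyapunov mulmxDl mulmxA.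
change (f 0 + alpha * dV 0 < 0); rewrite /f x_0 dV0.
have := posdef_schur_lt Rw_pos block_pos x0_neq0.
rewrite quadB quadZ; lra.
Qed.
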